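(* Let $(r_k)_{k\ge1}$ be a sequence of real numbers such that for every $\epsilon>0$ there exists $K=K(\epsilon)\in\mathbb{N}$ with the following property: whenever $k_1,\dots,k_n\in\mathbb{N}$ satisfy $k_1,\dots,k_n\ge K$ and $k=k_1+\dots+k_n$, we have $r_k\le r_{k_1}+\dots+r_{k_n}+k\epsilon$. Then $\lim_{k\to\infty}r_k/k$ exists. *)

From HB Require Import structures.
From mathcomp Require Import all_boot all_order all_algebra.
From mathcomp Require Import all_classical all_reals.
From mathcomp Require Import all_analysis.

From HB Require Import structures.
From mathcomp Require Import all_boot all_order all_algebra.
From mathcomp Require Import all_classical all_reals.
From mathcomp Require Import all_analysis.
From mathcomp Require Import lra zify.
Import Order.TTheory GRing.Theory Num.Theory.
Local Open Scope classical_set_scope.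
Local Open Scope ring_scope.

(* Fix m >= K(eps).  Every large k is (k %/ m - 1) blocks of size m plus one
   block m + t with t < m, so r_k <= (k %/ m - 1) r_m + r_(m+t) + k eps, and
   the finitely many values r_(m+t) only contribute O(1).  Hence
   limsup r_k/k <= r_m/m + 2 eps; choosing m >= K(eps) with r_m/m close to
   liminf r_k/k gives limsup <= liminf. *)

Section limn_esup_einf_complements.
Context {R : realType}.
Implicit Types (u : (\bar R)^nat) (a b c y : \bar R).
Local Open Scope ereal_scope.

Lemma lee_of_real_gt a b : (forall y : R, a < y%:E -> b <= y%:E) -> b <= a.
Proof.
case: a => [a| |] b_le.
- by apply/lee_addgt0Pr => e e_gt0; apply: b_le; rewrite lte_fin ltrDl.
- exact: leey.
- by rewrite (eq_ninfty (fun x => b_le x (ltNyr x))).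
Qed.

Lemma limn_esup_le u c : (\forall n \near \oo, u n <= c) -> limn_esup u <= c.
Proof.
move=> [N _ u_le]; rewrite limn_esup_lim; apply: lime_le; first exact: is_cvg_esups.
exists N => // n Nn; apply: ge_ereal_sup => _ [k /= nk <-].
by apply: u_le; apply: leq_trans nk.
Qed.

Lemma limn_einf_lt u y : limn_einf u < y ->
  forall n, exists2 m, (n <= m)%N & u m < y.
Proof.
rewrite limn_einf_lim (cvg_lim _ (@cvg_einfs_sup _ u)) // => lt_y n.
have einfs_le : einfs u n <= ereal_sup (range (einfs u)).
  by apply: ereal_sup_ubound; exists n.
by have /ereal_inf_lt[_ [m /= nm <-] umy] := le_lt_trans einfs_le lt_y; exists m.
Qed.

Lemma cvg_limn_einf u : limn_esup u <= limn_einf u -> u @ \oo --> limn_einf u.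
Proof.
move=> sup_le_inf; apply: (@squeeze_cvge _ _ _ _ (einfs u) u (esups u)).
- apply: nearW => n; apply/andP; split.
    by apply: ereal_inf_lbound; exists n => /=.
  by apply: ereal_sup_ubound; exists n => /=.
- by rewrite limn_einf_lim; exact: is_cvg_einfs.
- have -> : limn_einf u = limn_esup u by apply/le_anti; rewrite sup_le_inf limn_einf_sup.
  by rewrite limn_esup_lim; exact: is_cvg_esups.
Qed.

End limn_esup_einf_complements.

Lemma ratio_le_eventually {R : realType} (r : nat -> R) (a D eps : R) : 0 < eps ->
  (\forall k \near \oo, r k <= k%:R * (a + eps) + D) ->
  \forall k \near \oo, r k / k%:R <= a + 2 * eps.
Proof.
move=> eps_gt0 r_le.
have /cvgryPge/(_ (D / eps)) D_le := @cvgr_idn R.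
near=> k.
have k_gt0 : 0 < k%:R :> R by rewrite ltr0n; near: k; exists 1%N.
have D_le_k : D <= k%:R * eps by rewrite -ler_pdivrMr //; near: k.
have r_le_k : r k <= k%:R * (a + eps) + D by near: k.
rewrite ler_pdivrMr //; lra.
Unshelve. all: by end_near. Qed.

Section almost_subadditive.
Context {R : realType} {r : nat -> R} {eps : R} {K : nat}.
Hypothesis r_subadd : forall s : seq nat, s != [::] ->
  all (fun k => (0 < k)%N && (K <= k)%N) s ->
  r (sumn s) <= \sum_(k <- s) r k + (sumn s)%:R * eps.

Lemma almost_subadd_blocks m k : (K <= m)%N -> (0 < m)%N -> (m <= k)%N ->
  r k <= r (m + k %% m)%N + r m *+ (k %/ m).-1%N + k%:R * eps.
Proof.
move=> Km m_gt0 mk.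
set s := (m + k %% m)%N :: nseq (k %/ m).-1 m.
have sum_s : sumn s = k.
  have q_gt0 : (0 < k %/ m)%N by rewrite divn_gt0.
  rewrite /= sumn_nseq {3}(divn_eq k m); case: (k %/ m)%N q_gt0 => // q _ /=; lia.
have s_pos : all (fun k => (0 < k)%N && (K <= k)%N) s.
  by rewrite /= all_nseq addn_gt0 m_gt0 (leq_trans Km) ?leq_addr //= Km orbT.
by have := r_subadd s isT s_pos; rewrite sum_s big_cons big_nseq iter_addr_0.
Qed.

Lemma almost_subadd_ratio_le m : 0 < eps -> (K <= m)%N -> (0 < m)%N ->
  \forall k \near \oo, r k / k%:R <= r m / m%:R + 2 * eps.
Proof.
move=> eps_gt0 Km m_gt0; set a := r m / m%:R.
pose D := \sum_(t < m) `|r (m + t)%N - (m + t)%:R * a|.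
apply: (@ratio_le_eventually _ _ _ D _ eps_gt0); near=> k.
have mk : (m <= k)%N by near: k; exists m.
have := @almost_subadd_blocks m k Km m_gt0 mk.
have := divn_eq k m; have := ltn_mod k m; rewrite m_gt0.
have : (0 < k %/ m)%N by rewrite divn_gt0.
set q := (k %/ m)%N; set t := (k %% m)%N => q_gt0 t_lt_m k_qt.
have defect_le : r (m + t)%N - (m + t)%:R * a <= D.
  apply: le_trans (ler_norm _) _.
  rewrite /D (bigD1 (Ordinal t_lt_m)) //= lerDl; exact: sumr_ge0.
have blocks : r m *+ q.-1 = (k%:R - (m + t)%:R) * a.
  have blocksN : (q.-1 * m = k - (m + t))%N by rewrite k_qt; nia.
  rewrite -natrB; last by rewrite k_qt; nia.
  by rewrite -blocksN natrM -mulrA [_%:R * a]mulrC divfK ?mulr_natl // pnatr_eq0 -lt0n.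
rewrite blocks; lra.
Unshelve. all: by end_near. Qed.

End almost_subadditive.

Theorem lemma2p9 (R : realType) (r : nat -> R) :
  (forall eps : R, 0 < eps ->
     exists K : nat, forall s : seq nat,
       s != [::] ->
       all (fun k => (0 < k)%N && (K <= k)%N) s ->
       r (sumn s) <= \sum_(k <- s) r k + (sumn s)%:R * eps) ->
  exists l : \bar R,
    (fun k : nat => (r k / k%:R)%:E) @ \oo --> l.
Proof.
move=> r_subadd; set u := fun k : nat => (r k / k%:R)%:E.
exists (limn_einf u); apply: cvg_limn_einf.
apply: lee_of_real_gt => y liminf_lt_y; apply/lee_addgt0Pr => e e_gt0.
have e2_gt0 : 0 < e / 2 by rewrite divr_gt0.
have [K r_subadd_K] := r_subadd _ e2_gt0.
have [m Km um_lt_y] := limn_einf_lt _ _ liminf_lt_y K.+1.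
apply: limn_esup_le.
have := almost_subadd_ratio_le r_subadd_K m e2_gt0 (ltnW Km) (leq_ltn_trans (leq0n K) Km).
apply: filterS => k; rewrite /u lee_fin; move: um_lt_y; rewrite /u lte_fin; lra.
Qed.
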